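(* Let $p\in[0,1)$, $\alpha\in[0,1]$, $0\le h_1<\dots<h_N\le1$, and nonnegative weights $f_0^S(h_j),f_0^{NS}(h_j)$, $j=1,\dots,N$, each summing to $1$; set $f_0(h_j)=\alpha f_0^S(h_j)+(1-\alpha)f_0^{NS}(h_j)$, assume $f_0(h_N)>0$, and let $f_0([h_i,1])=\sum_{j\ge i}f_0(h_j)$. Let $m_0^{S,j}\in[-1,1]$ be given. Let $f^{NS,1},\dots,f^{NS,N}\in C([0,+\infty),P([-1,1]))$ (weak topology) with initial data $f_0^{NS,i}$, write $m^{NS,j}(t)=\int_{-1}^1w\,f^{NS,j}(t,dw)$, $$m(t)=\alpha\sum_{j}f_0^S(h_j)m_0^{S,j}+(1-\alpha)\sum_jf_0^{NS}(h_j)m^{NS,j}(t),\quad \beta_i(t)=\alpha\sum_{j\ge i}f_0^S(h_j)m_0^{S,j}+(1-\alpha)\sum_{j\ge i}f_0^{NS}(h_j)m^{NS,j}(t),$$ and assume that for all $i$, $t\ge0$ and $\phi\in C^1([-1,1])$, $$\int\phi\,df^{NS,i}(t)=\int\phi\,df_0^{NS,i}+\int_0^t\!\!\int_{-1}^1\phi'(w)\Big[p\big(m(s)-w\big)+(1-p)\big(\beta_i(s)-f_0([h_i,1])w\big)\Big]f^{NS,i}(s,dw)\,ds.$$ Then for every $i=1,\dots,N$, $$\frac{d}{dt}m^{NS,i}(t)=\alpha\sum_{j=1}^Nm_0^{S,j}\big(p+(1-p)1_{\{j\ge i\}}\big)f_0^S(h_j)+(1-\alpha)\sum_{j=1}^N\big(p+(1-p)1_{\{j\ge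 i\}}\big)f_0^{NS}(h_j)m^{NS,j}(t)-\big(p+(1-p)f_0([h_i,1])\big)m^{NS,i}(t).$$
   Context: $P([-1,1])$ is the set of Borel probability measures on $[-1,1]$. Interpretation: $f^{NS,i}(t)$ is the opinion distribution of non-stubborn individuals at hierarchy level $h_i$, $m^{NS,i}$ its mean, $m_0^{S,j}$ the mean opinion of stubborn individuals at level $h_j$, $\alpha$ the fraction of stubborn individuals. *)

From HB Require Import structures.
From mathcomp Require Import all_boot all_order all_algebra.
From mathcomp Require Import all_classical all_reals all_analysis.
Set Implicit Arguments. Unset Strict Implicit. Unset Printing Implicit Defensive.
Import Order.TTheory GRing.Theory Num.Theory numFieldNormedType.Exports.
Local Open Scope classical_set_scope.
Local Open Scope ring_scope.

Section Defs.
Variables (R : realType) (n : nat).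

Definition f0 (alpha : R) (fS fNS : 'I_n -> R) (j : 'I_n) : R :=
  alpha * fS j + (1 - alpha) * fNS j.

Definition f0_tail (alpha : R) (fS fNS : 'I_n -> R) (i : 'I_n) : R :=
  \sum_(j < n | (i <= j)%N) f0 alpha fS fNS j.

Definition integ11 (mu : probability R R) (phi : R -> R) : R :=
  Rintegral mu `[-1, 1] phi.

Definition mean (mu : probability R R) : R := integ11 mu id.

Definition mtot (alpha : R) (fS fNS m0S mNS : 'I_n -> R) : R :=
  alpha * \sum_(j < n) fS j * m0S j + (1 - alpha) * \sum_(j < n) fNS j * mNS j.

Definition beta (alpha : R) (fS fNS m0S mNS : 'I_n -> R) (i : 'I_n) : R :=
  alpha * \sum_(j < n | (i <= j)%N) fS j * m0S j
  + (1 - alpha) * \sum_(j < n | (i <= j)%N) fNS j * mNS j.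

End Defs.

From HB Require Import structures.
From mathcomp Require Import all_boot all_order all_algebra.
From mathcomp Require Import all_classical all_reals all_analysis.
From mathcomp Require Import ring.
Import Order.TTheory GRing.Theory Num.Theory numFieldNormedType.Exports.
Local Open Scope classical_set_scope.
Local Open Scope ring_scope.

(* Tested against phi(w) = w, the weak formulation involves a drift that is
   affine in w; integrating it against the probability f^{NS,i}(s) turns it
   into the right-hand side evaluated at s, so that
   m^{NS,i}(t) = m^{NS,i}(0) + \int_0^t rhs.  Weak continuity of the f^{NS,j}
   makes rhs continuous on [0, +oo), and the fundamental theorem of calculus
   gives the derivative for t > 0 and the right derivative at 0. *)

Section integ11.
Context {R : realType}.

Lemma finite_measure_continuous_compact_integrable
    (mu : {finite_measure set R -> \bar R}) (A : set R) (f : R -> R) :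
  compact A -> {within A, continuous f} -> mu.-integrable A (EFin \o f).
Proof.
move=> cptA cf; have mA := measurable_realfun.compact_measurable cptA.
apply: measurable_bounded_integrable => //.
- by rewrite ltey_eq fin_num_measure.
- exact: measurable_realfun.subspace_continuous_measurable_fun.
- have /compact_bounded[M [_ mrt]] := continuous_compact cf cptA.
  by exists M; split; rewrite ?num_real // => ? ? ? ?; exact: mrt.
Qed.

Lemma integ11_affine (mu : probability R R) (a b : R) :
  mu `[-1, 1]%classic = 1%E -> integ11 mu (fun w => a - b * w) = a - b * mean mu.
Proof.
move=> mass.
have int11 (phi : R -> R) : continuous phi -> mu.-integrable `[-1, 1] (EFin \o phi).
  move=> cphi; apply: finite_measure_continuous_compact_integrable.
    exact: segment_compact.
  exact: continuous_subspaceT.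
rewrite /integ11 /mean RintegralB //; last 2 first.
- by apply: int11 => ?; exact: cst_continuous.
- by apply: int11 => ?; exact: mulrl_continuous.
have mass1 : fine (mu `[-1, 1]%classic) = 1 by rewrite mass.
rewrite Rintegral_cst // mass1 mulr1 RintegralZl //.
by apply: int11 => ?; exact: cvg_id.
Qed.

End integ11.

Lemma continuous_comp_max {R : realType} (a : R) (g : R -> R) :
  {within `[a, +oo[, continuous g} -> continuous (fun t => g (Num.max a t)).
Proof.
move=> /continuous_within_itvcyP[g_int g_a] x; rewrite /continuous_at.
have [xa|ax|->] := ltgtP x a.
- by apply: cvg_near_cst; near do rewrite max_l// ltW//; exact: lt_nbhsl.
- apply: cvg_trans _ (g_int x _); last by rewrite in_itv /= ax.
  by apply: near_eq_cvg; near do rewrite max_r// ltW//; exact: lt_nbhsr.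
- have /continuous_withinNx : g (Num.max a t) @[t --> a^'] --> g (Num.max a a).
    rewrite maxxx; apply: (@cvg_at_right_left_dnbhs _ R^o).
    - apply: cvg_trans _ g_a; apply: near_eq_cvg.
      by near do rewrite max_r// ltW//; exact: nbhs_right_gt.
    - by apply: cvg_near_cst; near do rewrite max_l// ltW//; exact: nbhs_left_lt.
  by move=> ga; apply: cvg_trans ga _; rewrite /= maxxx.
Unshelve. all: by end_near.
Qed.

Section integral_representation.
Context {R : realType}.
Variables (F g : R -> R).
Hypothesis g_cont : {within `[0, +oo[, continuous g}.
Hypothesis F_integral :
  forall t, 0 <= t -> F t = F 0 + \int[lebesgue_measure]_(s in `[0, t]) g s.

(* Extended by the constant g 0 to the left of 0, g becomes continuous on R,
   so [continuous_FTC1] applies at every t >= 0; its base point must lie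
   strictly to the left of t, hence -1 below. *)
Let ge s := g (Num.max 0 s).

Let ge_cont : continuous ge.
Proof. exact: continuous_comp_max. Qed.

Let ge_integrable u : lebesgue_measure.-integrable `[-1, u] (EFin \o ge).
Proof.
apply: continuous_compact_integrable; first exact: segment_compact.
exact: continuous_subspaceT.
Qed.

Let G x := \int[lebesgue_measure]_(s in `[-1, x]) ge s.

Let F_G t : 0 <= t -> F t = F 0 + (G t - G 0).
Proof.
move=> t0; rewrite F_integral // /G Rintegral_itvB ?bnd_simp //.
rewrite Rintegral_itv_obnd_cbnd; last first.
  by apply: integrableS (ge_integrable t) => //; apply: subset_itvr; rewrite bnd_simp.
congr (_ + _); apply: eq_Rintegral => s.
by rewrite inE /= in_itv /= => /andP[s0 _]; rewrite /ge max_r.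
Qed.

Let G_FTC x : 0 <= x -> derivable G x 1 /\ G^`()%classic x = g x.
Proof.
move=> x0; have := @continuous_FTC1 R _ (BLeft (-1)) x (x + 1) _ _ _ (ge_cont x).
rewrite /ge max_r //; apply; [by rewrite ltrDl | exact: ge_integrable |].
by rewrite lte_fin (lt_le_trans _ x0) // ltrN10.
Qed.

Lemma integral_representation_is_derive (t : R) : 0 < t -> is_derive t 1 F (g t).
Proof.
move=> t0; have [dG G't] := G_FTC t (ltW t0).
have dG' : is_derive t 1 (cst (F 0 - G 0) + G) (0 + g t).
  by apply: is_deriveD; apply: DeriveDef dG _; rewrite -derive1E.
rewrite add0r in dG'; apply: near_eq_is_derive dG'.
near=> x; have x0 : 0 < x by near: x; exact: lt_nbhsr t0.
by rewrite /= (F_G x (ltW x0)) !fctE -addrA [- G 0 + _]addrC.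
Unshelve. all: by end_near.
Qed.

Lemma integral_representation_right_derive0 :
  (fun s => s^-1 * (F s - F 0)) @ 0^'+ --> g 0.
Proof.
have [dG <-] := G_FTC 0 (lexx 0); rewrite derive1E.
apply: cvg_trans _ (cvg_dnbhs_at_right dG); apply: near_eq_cvg.
near=> s; have s0 : 0 < s by near: s; exact: nbhs_right_gt.
rewrite /= (F_G s (ltW s0)) addrAC subrr add0r addr0.
by rewrite -[s%:A]/(s * 1) mulr1.
Unshelve. all: by end_near.
Qed.

End integral_representation.

Section mixture_sums.
Context {R : realType} {k : nat}.
Implicit Types (p alpha : R) (u fS fNS m0S mv : 'I_k -> R).

Lemma sum_mix_indicator p u (i : 'I_k) :
  \sum_(j < k) (p + (1 - p) * ((i <= j)%N)%:R) * u j =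
  p * \sum_(j < k) u j + (1 - p) * \sum_(j < k | (i <= j)%N) u j.
Proof.
rewrite !mulr_sumr (big_mkcond (fun j : 'I_k => (i <= j)%N)) -big_split /=.
by apply: eq_bigr => j _; case: (i <= j)%N => /=; ring.
Qed.

Lemma mix_mtot_beta p alpha fS fNS m0S mv (i : 'I_k) :
  p * mtot alpha fS fNS m0S mv + (1 - p) * beta alpha fS fNS m0S mv i =
  alpha * \sum_(j < k) m0S j * (p + (1 - p) * ((i <= j)%N)%:R) * fS j
  + (1 - alpha) * \sum_(j < k) (p + (1 - p) * ((i <= j)%N)%:R) * fNS j * mv j.
Proof.
under [X in alpha * X]eq_bigr do rewrite -mulrA mulrC -mulrA.
under [X in (1 - alpha) * X]eq_bigr do rewrite -mulrA.
by rewrite !sum_mix_indicator /mtot /beta; ring.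
Qed.

End mixture_sums.

(* Levels are indexed by 'I_n.+1, i.e. N = n.+1 >= 1 levels; ord_max is h_N. *)
Theorem proposition4p3 (R : realType) (n : nat) (p alpha : R)
  (h fS fNS m0S : 'I_n.+1 -> R) (f : 'I_n.+1 -> R -> probability R R) :
  0 <= p < 1 ->
  0 <= alpha <= 1 ->
  (forall j, 0 <= h j <= 1) ->
  (forall i j : 'I_n.+1, (i < j)%N -> h i < h j) ->
  (forall j, 0 <= fS j) -> (forall j, 0 <= fNS j) ->
  \sum_(j < n.+1) fS j = 1 -> \sum_(j < n.+1) fNS j = 1 ->
  0 < f0 alpha fS fNS ord_max ->
  (forall j, -1 <= m0S j <= 1) ->
  (* f^{NS,i}(t) is a probability measure on [-1,1] *)
  (forall i t, 0 <= t -> f i t `[-1, 1]%classic = 1%E) ->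
  (* weak continuity of t |-> f^{NS,i}(t) on [0,+oo) *)
  (forall i (phi : R -> R), continuous phi ->
     {within `[0, +oo[, continuous (fun t => integ11 (f i t) phi)}) ->
  (* weak formulation, for all C^1 test functions *)
  (forall i t (phi : R -> R), 0 <= t ->
     (forall x, derivable phi x 1) -> continuous (derive1 phi) ->
     integ11 (f i t) phi =
       integ11 (f i 0) phi
       + Rintegral lebesgue_measure `[0, t]%classic
           (fun s => integ11 (f i s) (fun w =>
              derive1 phi w *
              (p * (mtot alpha fS fNS m0S (fun j => mean (f j s)) - w)
               + (1 - p) * (beta alpha fS fNS m0S (fun j => mean (f j s)) i
                            - f0_tail alpha fS fNS i * w))))) ->
  forall i : 'I_n.+1,
    let mNS := fun j t => mean (f j t) in
    let rhs := fun t =>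
      alpha * \sum_(j < n.+1) m0S j * (p + (1 - p) * ((i <= j)%N)%:R) * fS j
      + (1 - alpha) * \sum_(j < n.+1) (p + (1 - p) * ((i <= j)%N)%:R) * fNS j * mNS j t
      - (p + (1 - p) * f0_tail alpha fS fNS i) * mNS i t in
    (forall t : R, 0 < t -> is_derive t 1 (mNS i) (rhs t)) /\
    ((fun s : R => s^-1 * (mNS i s - mNS i 0)) @ 0^'+ --> rhs 0).
Proof.
move=> _ _ _ _ _ _ _ _ _ _ mass weak_cont weak i mNS rhs.
have mean_cont j : {within `[0, +oo[, continuous (mNS j)}.
  by apply: weak_cont => x; exact: cvg_id.
have rhs_cont : {within `[0, +oo[, continuous rhs}.
  move=> t; apply: cvgB; first apply: cvgD.
  - exact: cvg_cst.
  - apply: cvgM; first exact: cvg_cst.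
    apply: (cvg_big add_continuous) => j _.
    by apply: cvgM; [exact: cvg_cst | exact: mean_cont].
  - by apply: cvgM; [exact: cvg_cst | exact: mean_cont].
have mean_integral t : 0 <= t ->
    mNS i t = mNS i 0 + \int[lebesgue_measure]_(s in `[0, t]) rhs s.
  move=> t0; have id' : derive1 (@id R) = cst 1.
    by apply/funext => x; exact: derive1_id.
  have := weak i t id t0 (fun x => @derivable_id _ _ x 1).
  rewrite id' => /(_ (@cst_continuous _ _ _)).
  rewrite /mNS /mean => ->; congr (_ + _); apply: eq_Rintegral => s.
  rewrite inE /= in_itv /= => /andP[s0 _].
  set M := mtot _ _ _ _ _; set B := beta _ _ _ _ _ _; set T := f0_tail _ _ _ _.
  have -> : (fun w => 1 * (p * (M - w) + (1 - p) * (B - T * w))) =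
            (fun w => (p * M + (1 - p) * B) - (p + (1 - p) * T) * w).
    by apply/funext => w; ring.
  by rewrite integ11_affine ?mass // mix_mtot_beta.
split=> [t t0|]; first exact: integral_representation_is_derive.
exact: integral_representation_right_derive0.
Qed.
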